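(* Let $G$ be a finite graph and $D$ a divisor on $G$. Then $\bigoplus_{m=0}^\infty R(G,mD)$ is finitely generated as a graded semi-ring over ${\mathbb{Z}}^{\mathrm{trop}}$.
   Context: A finite graph $G$ is connected, loops and multiple edges allowed. A divisor is $D=\sum_{x\in V(G)}D(x)[x]$, $D(x)\in{\mathbb{Z}}$; effective if all $D(x)\ge0$. A rational function is $f:V(G)\to{\mathbb{Z}}$; $\mathrm{ord}_x(f)=\sum_{e=\overline{xy}\in E(G)}(f(y)-f(x))$, $\mathrm{div}(f)=\sum_x\mathrm{ord}_x(f)[x]$. $R(G,D)=\{f: D+\mathrm{div}(f)\ge0\}$. The direct sum $\bigoplus_m R(G,mD)$ is a graded semi-ring over ${\mathbb{Z}}^{\mathrm{trop}}=({\mathbb{Z}},\max,+)$ with sum $\max$ in each degree, action $c\odot f=c+f$, product $f\odot g=f+g$ (degrees add). Finitely generated means there are finitely many homogeneous elements such that every homogeneous element is a finite tropical sum of ${\mathbb{Z}}^{\mathrm{trop}}$-multiples of tropical products of them. *)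

From HB Require Import structures.
From mathcomp Require Import all_boot all_order all_algebra.
Set Implicit Arguments. Unset Strict Implicit. Unset Printing Implicit Defensive.
Import Order.TTheory GRing.Theory Num.Theory.
Local Open Scope ring_scope.

(* A finite graph (loops and multiple edges allowed) on the vertex set V is
   given by its edge-multiplicity function w : V -> V -> nat, which must be
   symmetric; w x y is the number of edges between x and y (w x x = number of
   loops at x). *)
Definition symmetric_mult (V : finType) (w : V -> V -> nat) : Prop :=
  forall x y, w x y = w y x.

Definition adj (V : finType) (w : V -> V -> nat) : rel V :=
  fun x y => (0 < w x y)%N.
Definition graph_connected (V : finType) (w : V -> V -> nat) : Prop :=
  forall x y : V, connect (adj w) x y.

Definition ord (V : finType) (w : V -> V -> nat) (f : V -> int) (x : V) : int :=
  \sum_(y : V) (w x y)%:Z * (f y - f x).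

Definition inR (V : finType) (w : V -> V -> nat) (D : V -> int) (f : V -> int)
  : Prop := forall x : V, 0 <= D x + ord w f x.

Definition mulDiv (V : finType) (m : nat) (D : V -> int) : V -> int :=
  fun x => m%:Z * D x.

Definition trop_sum (V : finType) (g : V -> int) (gs : seq (V -> int)) : V -> int :=
  foldr (fun h acc => fun x => Num.max (h x) (acc x)) g gs.

(* c (.) (g_{i1} (.) ... (.) g_{ir}) = c + g_{i1} + ... + g_{ir} *)
Definition trop_monomial (V : finType) (k : nat) (gen : 'I_k -> V -> int)
  (t : int * seq 'I_k) : V -> int :=
  fun x => t.1 + \sum_(i <- t.2) gen i x.

Definition mono_deg (k : nat) (deg : 'I_k -> nat) (t : int * seq 'I_k) : nat :=
  (\sum_(i <- t.2) deg i)%N.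

(* The graded semiring (+)_m R(G, mD) over Z^trop is finitely generated:
   finitely many homogeneous generators (deg i, gen i) with gen i in
   R(G, (deg i) D), such that every homogeneous element f of degree m is a
   finite (nonempty) tropical sum of Z^trop-multiples of tropical products of
   generators, each product having total degree m. *)
Definition section_ring_fg (V : finType) (w : V -> V -> nat) (D : V -> int)
  : Prop :=
  exists (k : nat) (deg : 'I_k -> nat) (gen : 'I_k -> V -> int),
    (forall i, inR w (mulDiv (deg i) D) (gen i)) /\
    forall (m : nat) (f : V -> int), inR w (mulDiv m D) f ->
      exists (t0 : int * seq 'I_k) (ts : seq (int * seq 'I_k)),
        (forall t, t \in t0 :: ts -> mono_deg deg t = m) /\
        f =1 trop_sum (trop_monomial gen t0) (map (trop_monomial gen) ts).

(* Shift f in R(G, mD) by a constant c so that f - c >= 0, and record it as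
   the vector (m, f - c, mD + div f) of natural numbers indexed by 1 + V + V.
   These vectors are the natural points of a linear subspace, so the
   difference of two of them is again one as soon as it is nonnegative.  By
   Dickson's lemma there are finitely many nonzero such vectors, one below
   every other nonzero one, and subtracting them repeatedly writes every
   vector as a sum of them.  Read
   back, this says f = c + (sum of generators): a single Z^trop-multiple of a
   tropical product of finitely many homogeneous generators. *)

From mathcomp Require Import all_boot all_order all_algebra.
From mathcomp Require Import ring zify.
From Stdlib Require Import Classical.
Import Order.TTheory GRing.Theory Num.Theory.

Set Implicit Arguments.
Unset Strict Implicit.
Unset Printing Implicit Defensive.

Definition finitely_dominated (T : eqType) (s : seq T) (A S : (T -> nat) -> Prop)
  : Prop :=
  exists (I : finType) (B : I -> T -> nat), (forall i, A (B i)) /\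
    forall f, S f -> exists i, {in s, forall t, B i t <= f t}.

Lemma finitely_dominated_bigcup (T : eqType) (s : seq T) (I : finType)
    (A : (T -> nat) -> Prop) (S : I -> (T -> nat) -> Prop) :
  (forall i, finitely_dominated s A (S i)) ->
  finitely_dominated s A (fun f => exists i, S i f).
Proof.
move=> /fin_all_exists [J /fin_all_exists [B /all_and2 [BA Bdom]]].
exists {i : I & J i}, (fun p => B (tag p) (tagged p)); split=> [[i j] //|f [i /Bdom]].
by move=> [j dom_j]; exists (Tagged J j).
Qed.

Lemma dickson (T : eqType) (s : seq T) (A : (T -> nat) -> Prop) :
  finitely_dominated s A A.
Proof.
elim: s A => [|t s IHs] A.
  have [[f Af]|noA] := classic (exists f, A f).
    by exists unit, (fun=> f); split=> // g _; exists tt.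
  by exists void, (fun=> fun=> 0); split=> [[]|g Ag]; case: noA; exists g.
have [I [B [BA Bdom]]] := IHs A.
(* Above the largest t-coordinate c of the dominators of the other coordinates
   those dominators suffice; below it, each slice f t = k is handled apart. *)
pose c := (\max_i B i t)%N.
pose S (o : option 'I_c) f :=
  A f /\ if o is Some k then f t = k else (c <= f t)%N.
suff: finitely_dominated (t :: s) A (fun f => exists o, S o f).
  move=> [J [B' [B'A B'dom]]]; exists J, B'; split=> // f Af; apply: B'dom.
  have [cf|fc] := leqP c (f t); first by exists None.
  by exists (Some (Ordinal fc)).
apply: finitely_dominated_bigcup => -[k|].
  have [J [B' [B'A B'dom]]] := IHs (S (Some k)).
  exists J, B'; split=> [j|f Sf]; first by case: (B'A j).
  have [j dom_j] := B'dom f Sf; exists j => u; rewrite inE => /predU1P [->|/dom_j//].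
  by case: (B'A j) => _ ->; case: Sf => _ ->.
exists I, B; split=> // f [Af cf]; have [i dom_i] := Bdom f Af.
exists i => u; rewrite inE => /predU1P [->|/dom_i//].
exact: leq_trans (leq_bigmax (F := fun j => B j t) i) cf.
Qed.

Definition subtractive (T : Type) (P : (T -> nat) -> Prop) : Prop :=
  forall x y, P x -> P y -> (forall t, y t <= x t) -> P (fun t => x t - y t).

Lemma subtractive_generated (T : finType) (P : (T -> nat) -> Prop) :
  subtractive P ->
  exists k (g : 'I_k -> T -> nat), (forall j, P (g j)) /\
    forall x, P x -> exists r : seq 'I_k, forall t, x t = \sum_(j <- r) g j t.
Proof.
move=> subP; have [I [B [BA Bdom]]] := dickson (enum T) (fun x => P x /\ 0 < \sum_t x t).
exists #|I|, (fun j => B (enum_val j)); split=> [j|x]; first by case: (BA (enum_val j)).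
have [n] := ubnP (\sum_t x t); elim: n x => // n IHn x sx Px.
have [/eqP|pos] := posnP (\sum_t x t).
  by rewrite sum_nat_eq0 => /forallP x0; exists [::] => t; rewrite big_nil; apply/eqP/x0.
have [i dom_i] := Bdom x (conj Px pos).
have {dom_i} le_Bx t : B i t <= x t by apply: dom_i; rewrite mem_enum.
have [PB posB] := BA i.
have sum_split : \sum_t (x t - B i t) + \sum_t B i t = \sum_t x t.
  by rewrite -big_split; apply: eq_bigr => t _ /=; rewrite subnK.
have [|r xr] := IHn (fun t => x t - B i t) _ (subP _ _ Px PB le_Bx); first lia.
by exists (enum_rank i :: r) => t; rewrite big_cons enum_rankK -xr subnKC.
Qed.

Local Open Scope ring_scope.

Section DivisorsOfRationalFunctions.

Variables (V : finType) (w : V -> V -> nat).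

Lemma eq_ord (f g : V -> int) x : f =1 g -> ord w f x = ord w g x.
Proof. by move=> eq_fg; apply: eq_bigr => y _; rewrite !eq_fg. Qed.

Lemma ordB (f g : V -> int) x : ord w (fun y => f y - g y) x = ord w f x - ord w g x.
Proof. by rewrite /ord -sumrB; apply: eq_bigr => y _; ring. Qed.

Lemma ordDr (f : V -> int) (c : int) x : ord w (fun y => f y + c) x = ord w f x.
Proof. by apply: eq_bigr => y _; congr (_ * _); ring. Qed.

End DivisorsOfRationalFunctions.

Lemma Posz_sum (I : Type) (r : seq I) (F : I -> nat) :
  (\sum_(i <- r) F i)%N%:Z = \sum_(i <- r) (F i)%:Z.
Proof. by rewrite -natz natr_sum; apply: eq_bigr => i _; rewrite natz. Qed.

Lemma finite_lower_bound (T : finType) (f : T -> int) : exists c, forall t, c <= f t.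
Proof.
exists (- \sum_t `|f t|) => t; rewrite lerNl.
apply: le_trans (ler_norm _) _; rewrite normrN.
by rewrite (bigD1 t) //= lerDl sumr_ge0.
Qed.

Section SectionVectors.

Variables (V : finType) (w : V -> V -> nat) (D : V -> int).

(* x None is the degree m, x (Some (inl v)) the value of a function at v and
   x (Some (inr v)) the coefficient of mD + div f at v. *)
Definition section_vector (x : option (V + V) -> nat) : Prop :=
  forall v, (x (Some (inr v)))%:Z =
    mulDiv (x None) D v + ord w (fun y => (x (Some (inl y)))%:Z) v.

Definition encode_section (m : nat) (c : int) (f : V -> int) : option (V + V) -> nat :=
  fun t => match t with
  | None => m
  | Some (inl v) => absz (f v - c)
  | Some (inr v) => absz (mulDiv m D v + ord w f v)
  end.

Lemma section_vector_subtractive : subtractive section_vector.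
Proof.
move=> x y Px Py le_yx v /=.
rewrite (@eq_ord _ _ _ (fun u => (x (Some (inl u)))%:Z - (y (Some (inl u)))%:Z));
  last by move=> u; rewrite subzn.
by rewrite ordB -subzn ?le_yx // Px Py /mulDiv -subzn ?le_yx //; ring.
Qed.

Lemma section_vector_encode m c f :
  inR w (mulDiv m D) f -> (forall v, c <= f v) ->
  section_vector (encode_section m c f).
Proof.
move=> Rf le_cf v /=; rewrite gez0_abs; last exact: Rf.
congr (_ + _); rewrite -(ordDr w f (- c)); apply: eq_ord => u.
by rewrite gez0_abs ?subr_ge0.
Qed.

End SectionVectors.

Theorem theorem3p7 (V : finType) (w : V -> V -> nat) (D : V -> int) :
  symmetric_mult w -> graph_connected w -> section_ring_fg w D.
Proof.
move=> _ _.
have [k [g [gP gen]]] := subtractive_generated (@section_vector_subtractive _ w D).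
exists k, (fun j => g j None), (fun j v => (g j (Some (inl v)))%:Z); split.
  by move=> j v; rewrite /inR -gP.
move=> m f Rf; have [c le_cf] := finite_lower_bound f.
have [r encr] := gen _ (section_vector_encode Rf le_cf).
exists (c, r), [::]; split=> [t|v].
  by rewrite mem_seq1 => /eqP ->; rewrite /mono_deg -(encr None).
have := congr1 Posz (encr (Some (inl v))).
rewrite /= gez0_abs ?subr_ge0 // Posz_sum /trop_monomial /= => <-.
by rewrite addrCA subrr addr0.
Qed.
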